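(* Let $I\subseteq R$ be a good ideal. Suppose $\mathbb N^n$ is the disjoint union of finitely many cones $C_1,\dots,C_r$ such that $I_a=I_b$ whenever $a,b$ lie in the same cone $C_j$. Let $L$ be the maximum, over $j$, of the sum of the coordinates of the vertex of $C_j$, and assume that every zero-dimensional cone $C_j$ has vertex coordinate sum strictly less than $L$. Then $I^k$ is Ratliff--Rush (i.e. $\widetilde{I^k}=I^k$) for every integer $k\ge L+1$.
   Context: Let $\mathbb K$ be a field, $R=\mathbb K[x_1,\dots,x_n]$, $\mathfrak m=\langle x_1,\dots,x_n\rangle$, $\mathbb N=\{0,1,2,\dots\}$. A monomial $x_1^{\alpha_1}\cdots x_n^{\alpha_n}$ is identified with the point $(\alpha_1,\dots,\alpha_n)\in\mathbb N^n$. For a monomial ideal $I$, $G(I)$ denotes its (unique) minimal monomial generating set. If $I$ is an $\mathfrak m$-primary monomial ideal, then for each $i$ there is a unique $d_i\ge1$ with $x_i^{d_i}\in G(I)$; write $\mu_i=x_i^{d_i}$. For $(a_1,\dots,a_n)\in\mathbb N^n$ the box associated to $I$ is $B_{a_1,\dots,a_n}=([a_1d_1,(a_1+1)d_1]\times\cdots\times[a_nd_n,(a_n+1)d_n])\cap\mathbb N^n$; a monomial belongs to a box if its exponent vector does. An $\mathfrak m$-primary monomial ideal $I$ is called good if for every integer $l\ge1$, every element of $G(I^l)$ belongs to some box $B_{a_1,\dots,a_n}$ with $a_1+\dots+a_n=l-1$. For a good ideal $I$ and $a=(a_1,\dots,a_n)\in\mathbb N^n$, with $l=a_1+\dots+a_n+1$,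 define $I_{a}=I_{a_1,\dots,a_n}=\left\langle \frac{m}{\mu_1^{a_1}\cdots\mu_n^{a_n}} : m\in B_{a_1,\dots,a_n}\cap G(I^l)\right\rangle$. For $v\in\mathbb N^n$ and $S\subseteq\{1,\dots,n\}$, the cone with vertex $v$ and set of fixed coordinates $S$ is $\{c\in\mathbb N^n : c_i=v_i \text{ for } i\in S,\ c_i\ge v_i \text{ for } i\notin S\}$; its dimension is $n-|S|$. The Ratliff--Rush closure of a regular ideal $J$ is $\tilde J=\bigcup_{k\ge0}(J^{k+1}:J^k)$, and $J$ is Ratliff--Rush if $J=\tilde J$. *)

(* Monomial ideals of K[x_1..x_n] modelled by their sets of
   exponent vectors. *)
From mathcomp Require Import all_boot.
Set Implicit Arguments. Unset Strict Implicit. Unset Printing Implicit Defensive.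

Definition Mon (n : nat) := {ffun 'I_n -> nat}.

Definition madd n (a b : Mon n) : Mon n := [ffun i => a i + b i].
Definition mle n (a b : Mon n) : Prop := forall i, a i <= b i.
Definition msum n (a : Mon n) : nat := \sum_(i < n) a i.
Definition pure n (i : 'I_n) (e : nat) : Mon n := [ffun j => if j == i then e else 0].
Definition mone n : Mon n := [ffun => 0].

Definition monideal n (I : Mon n -> Prop) : Prop :=
  forall a b, I a -> mle a b -> I b.

Definition mingen n (I : Mon n -> Prop) (m : Mon n) : Prop :=
  I m /\ forall m', I m' -> mle m' m -> m' = m.

Definition mprimary n (I : Mon n -> Prop) : Prop :=
  monideal I /\ ~ I (mone n) /\ forall i : 'I_n, exists e, I (pure i e).

Definition mprod n (A B : Mon n -> Prop) : Mon n -> Prop :=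
  fun m => exists a b, A a /\ B b /\ mle (madd a b) m.
Fixpoint mpow n (I : Mon n -> Prop) (k : nat) : Mon n -> Prop :=
  match k with
  | 0 => fun _ => True
  | k'.+1 => mprod I (mpow I k')
  end.

Definition box n (d : 'I_n -> nat) (a m : Mon n) : Prop :=
  forall i, a i * d i <= m i <= (a i).+1 * d i.

Definition good n (I : Mon n -> Prop) (d : 'I_n -> nat) : Prop :=
  forall l, 0 < l -> forall m, mingen (mpow I l) m ->
    exists a : Mon n, msum a = l.-1 /\ box d a m.

(* the ideal I_a : generated by m / (mu_1^{a_1} ... mu_n^{a_n}) for
   m in B_a ∩ G(I^l), l = |a| + 1 *)
Definition Iideal n (I : Mon n -> Prop) (d : 'I_n -> nat) (a : Mon n) : Mon n -> Prop :=
  fun c => exists m, box d a m /\ mingen (mpow I (msum a).+1) m /\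
    mle [ffun i => m i - a i * d i] c.

Definition cone n (v : Mon n) (S : {set 'I_n}) (c : Mon n) : Prop :=
  forall i, (i \in S -> c i = v i) /\ (i \notin S -> v i <= c i).

Definition mcolon n (A B : Mon n -> Prop) : Mon n -> Prop :=
  fun m => forall b, B b -> A (madd m b).

Definition rrclosure n (J : Mon n -> Prop) : Mon n -> Prop :=
  fun m => exists k, mcolon (mpow J k.+1) (mpow J k) m.

Definition ratliffRush n (J : Mon n -> Prop) : Prop :=
  forall m, rrclosure J m <-> J m.

From mathcomp Require Import all_boot zify.
From Stdlib Require Import Classical.
Set Implicit Arguments. Unset Strict Implicit. Unset Printing Implicit Defensive.

(* Write mu^c for the monomial prod_i x_i^(c_i d_i) and, for a monomial m,
   M = floor(m / d) for the coordinatewise quotient, so mu^M <= m.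
   Let J = I^k and let m * J^t <= J^(t+1).  If |M| >= k then m is divisible
   by mu^M, which lies in I^|M| <= I^k.  Otherwise test the colon against the
   pure power b = x_i^(t k d_i) of J^t: a minimal generator g <= m b of
   I^(k(t+1)) lies in a box B_a with |a| = k(t+1) - 1 and a <= M + t k e_i.
   Counting degrees gives |M| >= k - 1, and when |M| = k - 1 the box index is
   exactly a = M + t k e_i, so m / mu^M lies in I_(M + t k e_i).  If the cone
   containing M has a free coordinate i, then M + t k e_i lies in the same
   cone, hence I_M contains m / mu^M, which says m is in I^|M|+1 = I^k.  If
   the cone is zero-dimensional, then |M| = |vertex| < L <= k - 1 <= |M|. *)

Section MonomialOrder.
Variable n : nat.
Implicit Types (a b c g y : Mon n).

Lemma mle_trans a b c : mle a b -> mle b c -> mle a c.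
Proof. by move=> hab hbc i; apply: leq_trans (hab i) (hbc i). Qed.

Lemma mle_maddr a b : mle b (madd a b).
Proof. by move=> i; rewrite ffunE leq_addl. Qed.

Lemma msum_madd a b : msum (madd a b) = msum a + msum b.
Proof. by rewrite /msum -big_split; apply: eq_bigr => i _; rewrite ffunE. Qed.

Lemma msum_pure (i : 'I_n) e : msum (pure i e) = e.
Proof.
rewrite /msum (bigD1 i) //= big1 => [|j /negbTE ji]; by rewrite ffunE ?eqxx ?addn0 ?ji.
Qed.

Lemma msum_le a b : mle a b -> msum a <= msum b.
Proof. by move=> hab; apply: leq_sum => i _; apply: hab. Qed.

Lemma msum_eq a b : mle a b -> msum a = msum b -> a = b.
Proof.
move=> hab e; apply/ffunP => i.
have : \sum_(j < n) (b j - a j) = 0 by rewrite sumnB // -/(msum b) -/(msum a) e subnn.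
move/eqP; rewrite sum_nat_eq0 => /forallP /(_ i) /=; rewrite subn_eq0 => hba.
by apply/eqP; rewrite eqn_leq hab.
Qed.

Lemma not_mingen_smaller (P : Mon n -> Prop) y :
  P y -> ~ mingen P y -> exists g, [/\ P g, mle g y & msum g < msum y].
Proof.
move=> Py nmin; apply: NNPP => none; apply: nmin; split=> // g Pg hgy.
apply: NNPP => ne; apply: none; exists g; split=> //.
by rewrite ltn_neqAle msum_le // andbT; apply/eqP => e; apply: ne; apply: msum_eq.
Qed.

Lemma mingen_exists (P : Mon n -> Prop) y : P y -> exists2 g, mingen P g & mle g y.
Proof.
move: {2}(msum y) (leqnn (msum y)) => s; elim: s y => [|s IH] y hs Py;
  (have [miny|] := classic (mingen P y); first by exists y);
  case/(not_mingen_smaller Py) => g [Pg hgy ltg].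
  by move: (leq_trans ltg hs).
have [g' mg' hg'] := IH g (leq_trans ltg hs) Pg.
by exists g' => //; apply: mle_trans hgy.
Qed.

Lemma cone_madd_pure (v : Mon n) S c i e :
  cone v S c -> i \notin S -> cone v S (madd c (pure i e)).
Proof.
move=> hc hi l; have [fixed free] := hc l; rewrite !ffunE; split.
  by move=> hl; case: eqP => [el|_]; [move: hi; rewrite -el hl | rewrite addn0 fixed].
by move=> hl; apply: leq_trans (free hl) (leq_addr _ _).
Qed.

Lemma cone_vertex (v : Mon n) c : cone v setT c -> c = v.
Proof. by move=> hc; apply/ffunP => i; case: (hc i) => -> //; rewrite inE. Qed.
End MonomialOrder.

Section Powers.
Variable n : nat.
Implicit Types (A I : Mon n -> Prop) (a b c y z : Mon n).

Lemma mpow_up I p a b : mpow I p a -> mle a b -> mpow I p b.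
Proof.
case: p => [//|p] [x [y [Ix [Iy h]]]] hab.
by exists x, y; split=> //; split=> //; apply: mle_trans h hab.
Qed.

Lemma mpow_anti I p q z : p <= q -> mpow I q z -> mpow I p z.
Proof.
move=> /subnK <-; elim: (q - p) z => [|s IH] z; first by rewrite add0n.
rewrite addSn => -[x [y [_ [Iy h]]]]; apply: IH.
by apply: mpow_up Iy (mle_trans (mle_maddr _ _) h).
Qed.

Lemma mpow_add I p q z : mprod (mpow I p) (mpow I q) z -> mpow I (p + q) z.
Proof.
elim: p z => [|p IH] z [a [b [Ha [Hb h]]]].
  by apply: mpow_up Hb (mle_trans (mle_maddr _ _) h).
case: Ha => [a1 [a2 [Ia1 [Ia2 h1]]]].
rewrite addSn; exists a1, (madd a2 b); split=> //; split.
  by apply: IH; exists a2, b; split=> //; split.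
move=> i; move: (h1 i) (h i); rewrite !ffunE; lia.
Qed.

Lemma mpow_mul I k s z : mpow (mpow I k) s z -> mpow I (k * s) z.
Proof.
elim: s z => [|s IH] z; first by rewrite muln0.
move=> [a [b [Ha [Hb h]]]]; rewrite mulnS; apply: mpow_add.
by exists a, b; split=> //; split=> //; apply: IH.
Qed.

Lemma mpow_pure A i e t : A (pure i e) -> mpow A t (pure i (t * e)).
Proof.
move=> hA; elim: t => [|t IH] //=.
exists (pure i e), (pure i (t * e)); split=> //; split=> // j.
by rewrite !ffunE; case: (j == i); rewrite ?mulSn.
Qed.

Definition mupow (d : 'I_n -> nat) c : Mon n := [ffun j => c j * d j].

Definition mquot (d : 'I_n -> nat) y : Mon n := [ffun j => y j %/ d j].

Lemma mpow_mupow I d : (forall i, I (pure i (d i))) ->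
  forall c, mpow I (msum c) (mupow d c).
Proof.
move=> hdI c; have [s sc] : exists s, msum c = s by eexists.
rewrite sc; elim: s c sc => [|s IH] c sc //=.
have [j cj] : exists j, 0 < c j.
  case: (boolP [exists j, 0 < c j]) => [/existsP [j cj]|/existsPn c0]; first by exists j.
  by move: sc; rewrite /msum big1 => [|i _] //; apply/eqP; rewrite -leqn0 leqNgt c0.
pose c' : Mon n := [ffun l => c l - (l == j)].
have c_split : c = madd (pure j 1) c'.
  apply/ffunP => l; rewrite !ffunE; case: (eqVneq l j) => [->|_]; last by rewrite subn0.
  by rewrite add1n subn1 prednK.
have sc' : msum c' = s by move: sc; rewrite c_split msum_madd msum_pure add1n => -[].
exists (pure j (d j)), (mupow d c'); split=> //; split; first exact: IH.
by move=> l; rewrite c_split !ffunE; case: eqP => [->|_]; rewrite ?mulnDl ?mul1n.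
Qed.

Lemma mupow_pure d i e : mupow d (pure i e) = pure i (e * d i).
Proof. by apply/ffunP => j; rewrite !ffunE; case: eqP => [->|]. Qed.

Lemma mupow_mquot_le d y : mle (mupow d (mquot d y)) y.
Proof. by move=> j; rewrite !ffunE leq_divM. Qed.

Lemma mquot_madd_mupow d y c : (forall j, 0 < d j) ->
  mquot d (madd y (mupow d c)) = madd (mquot d y) c.
Proof. by move=> dpos; apply/ffunP => j; rewrite !ffunE addnC divnMDl // addnC. Qed.

Lemma box_mquot d a g y : (forall j, 0 < d j) -> box d a g -> mle g y ->
  mle a (mquot d y).
Proof.
move=> dpos hbox hgy j; rewrite ffunE leq_divRL //.
by case/andP: (hbox j) => h _; apply: leq_trans h (hgy j).
Qed.

Lemma Iideal_mem I d a c : Iideal I d a c -> mpow I (msum a).+1 (madd c (mupow d a)).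
Proof.
case=> g [hbox [[Ig _] hgc]]; apply: mpow_up Ig _ => j.
by move: (hbox j) (hgc j); rewrite !ffunE => /andP[h _]; lia.
Qed.
End Powers.

Lemma pure_exponents_pos n (I : Mon n -> Prop) (d : 'I_n -> nat) :
  ~ I (mone n) -> (forall i, I (pure i (d i))) -> forall i, 0 < d i.
Proof.
move=> hproper hdI i; rewrite lt0n; apply/negP => /eqP di0; apply: hproper.
suff -> : mone n = pure i (d i) by [].
by apply/ffunP => j; rewrite !ffunE di0; case: (_ == _).
Qed.

Lemma rrclosure_ext n (J : Mon n -> Prop) m : J m -> rrclosure J m.
Proof. by move=> Jm; exists 0 => b _; exists m, b; split=> //; split. Qed.

Lemma residue_mupow n (d : 'I_n -> nat) (m : Mon n) :
  madd [ffun j => m j - mquot d m j * d j] (mupow d (mquot d m)) = m.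
Proof. by apply/ffunP => j; rewrite !ffunE subnK // leq_divM. Qed.

Section ColonTest.
Variables (n : nat) (I : Mon n -> Prop) (d : 'I_n -> nat).
Hypothesis hdI : forall i, I (pure i (d i)).
Hypothesis dpos : forall i, 0 < d i.
Hypothesis hgood : good I d.
Variables (k t : nat) (m : Mon n).
Hypothesis kpos : 0 < k.
Hypothesis Ht : mcolon (mpow (mpow I k) t.+1) (mpow (mpow I k) t) m.

Let M := mquot d m.

Lemma colon_box i : exists g a,
  [/\ mingen (mpow I (k * t.+1)) g, msum a = (k * t.+1).-1, box d a g,
      mle a (madd M (pure i (t * k))) & mle g (madd m (mupow d (pure i (t * k))))].
Proof.
set b := mupow d (pure i (t * k)).
have Jb : mpow (mpow I k) t b.
  by rewrite /b mupow_pure -mulnA; apply/mpow_pure/mpow_pure.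
have [g mg hg] := mingen_exists (mpow_mul (Ht Jb)).
have kt_pos : 0 < k * t.+1 by rewrite muln_gt0 kpos.
have [a [ha hbox]] := hgood kt_pos mg.
exists g, a; split=> //.
by rewrite -mquot_madd_mupow //; apply: box_mquot hbox hg.
Qed.

Lemma colon_lower (i : 'I_n) : k.-1 <= msum M.
Proof.
have [g [a [_ ha _ haM _]]] := colon_box i.
by move: (msum_le haM); rewrite msum_madd msum_pure ha mulnS (mulnC t k); lia.
Qed.

Lemma colon_Iideal i : msum M = k.-1 ->
  Iideal I d (madd M (pure i (t * k))) [ffun j => m j - M j * d j].
Proof.
move=> eM; have [g [a [mg ha hbox haM hgm]]] := colon_box i.
have aM : a = madd M (pure i (t * k)).
  apply: (msum_eq haM); rewrite msum_madd msum_pure ha eM mulnS (mulnC t k); lia.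
exists g; rewrite -aM ha prednK ?muln_gt0 ?kpos //; split=> //; split=> // j.
move: (hgm j) (mupow_mquot_le d m j); rewrite aM !ffunE; lia.
Qed.
End ColonTest.

Theorem mainTheorem17 (n : nat) (I : Mon n -> Prop) (d : 'I_n -> nat)
  (hI : mprimary I)
  (hd : forall i : 'I_n, mingen I (pure i (d i)))
  (hgood : good I d)
  (r : nat) (v : 'I_r -> Mon n) (S : 'I_r -> {set 'I_n})
  (hpart : forall c : Mon n, exists! j : 'I_r, cone (v j) (S j) c)
  (hconst : forall (j : 'I_r) (a b : Mon n), cone (v j) (S j) a -> cone (v j) (S j) b ->
              forall c, Iideal I d a c <-> Iideal I d b c)
  (hzero : forall j : 'I_r, #|S j| = n ->
              msum (v j) < \max_(j' < r) msum (v j')) :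
  forall k : nat, (\max_(j < r) msum (v j)).+1 <= k -> ratliffRush (mpow I k).
Proof.
have [_ [hproper _]] := hI.
have hdI i : I (pure i (d i)) by case: (hd i).
have dpos := pure_exponents_pos hproper hdI.
move=> k hk m; split; last exact: rrclosure_ext.
case=> t Ht; set L := \max_(j < r) msum (v j) in hk hzero.
have kpos : 0 < k by apply: leq_trans hk.
have lower := colon_lower hdI dpos hgood kpos Ht.
set M := mquot d m in lower.
(* If |M| >= k, then mu^M in I^k divides m. *)
have [bigM|smallM] := leqP k (msum M).
  by apply: mpow_up (mpow_anti bigM (mpow_mupow hdI M)) (mupow_mquot_le d m).
have [j0 [coneM _]] := hpart M.
(* The cone of M has a free coordinate i: I_M = I_(M + t k e_i). *)
case: (S j0 =P setT) => [full|/eqP]; last first.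
  rewrite -subTset => /subsetPn [i _ free_i].
  have eM : msum M = k.-1 by have := lower i; lia.
  have := (hconst j0 _ _ coneM (cone_madd_pure _ coneM free_i) _).2
            (colon_Iideal hdI dpos hgood kpos Ht i eM).
  by move/Iideal_mem; rewrite eM prednK // residue_mupow.
(* The cone of M is zero-dimensional: |M| < L <= k - 1 <= |M|. *)
rewrite full in coneM; have vM := cone_vertex coneM.
have := hzero j0; rewrite full cardsT card_ord -vM => /(_ erefl) ltL.
case: (posnP n) => [n0|npos]; last by have := lower (Ordinal npos); lia.
have deg0 (c : Mon n) : msum c = 0.
  by apply: big1 => i _; have := ltn_ord i; rewrite [X in _ < X]n0.
by move: ltL; rewrite /L big1 ?deg0.
Qed.
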